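(* Consider the SBBS with $d=2$ balls, error probability $\varepsilon\in[0,1]$ and any capacity $c\in\{1,2,\dots\}\cup\{\infty\}$, started with the two balls adjacent ($W_0=0$). Let $X$ be the bulk process, $X_0=0$, $X_{t+1}-X_t=\eta^{(2)}_t-\eta^{(1)}_t$. Then almost surely, for all $t\ge0$, $$W_t=X_t-\min_{0\le s\le t}X_s.$$
   Context: Stochastic box-ball system (SBBS). Fix an error probability $\varepsilon\in[0,1]$ and a capacity $c\in\{1,2,\dots\}\cup\{\infty\}$. A configuration is $\zeta\in\{0,1\}^{\mathbb N}$ with finitely many $1$'s (balls). The SBBS is driven as follows: at each time $t$ there are i.i.d. coins $\eta^{(1)}_t,\dots,\eta^{(d)}_t\sim\mathrm{Bernoulli}(1-\varepsilon)$ ($d$ = number of balls), independent over $t$. To produce $\zeta_{t+1}$ from $\zeta_t$, a carrier starts empty at site $1$ and scans sites $1,2,3,\dots$ in order: when it reaches the $i$-th ball (from the left) of $\zeta_t$ it picks it up iff $\eta_t^{(i)}=1$ and its current load is $<c$ (otherwise the ball stays); when it reaches an empty site while its load is $\ge1$, it drops one ball there (load decreases by $1$). The number $d$ of balls is conserved; with $d=2$ and ball positions $\zeta^{(1)}_t<\zeta^{(2)}_t$ the gap process is $W_t=\zeta^{(2)}_t-\zeta^{(1)}_t-1$. *)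

From HB Require Import structures.
From mathcomp Require Import all_boot all_order all_algebra.
From mathcomp Require Import all_classical all_reals all_analysis.
Set Implicit Arguments. Unset Strict Implicit. Unset Printing Implicit Defensive.
Import Order.TTheory GRing.Theory Num.Theory.

(* Capacity: [Some c] is a finite capacity c (c >= 1 assumed separately),
   [None] is capacity infinity. *)
Definition below_cap (cap : option nat) (l : nat) : bool :=
  if cap is Some c then (l < c)%N else true.

(* A configuration is the sorted list of ball positions (sites 1,2,3,...).
   [coin k] is the coin of the (k+1)-th ball from the left at this time step,
   i.e. [coin k] stands for eta^{(k+1)}.  [carrier cap s coin x] is the pair
   (load, number of balls met) after the carrier has scanned sites 1..x. *)
Fixpoint carrier (cap : option nat) (s : seq nat) (coin : nat -> bool) (x : nat)
  : nat * nat :=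
  match x with
  | 0 => (0, 0)%N
  | x'.+1 =>
      let: (l, k) := carrier cap s coin x' in
      if x \in s then
        (if coin k && below_cap cap l then (l.+1, k.+1) else (l, k.+1))
      else (if (0 < l)%N then (l.-1, k) else (l, k))
  end.

Definition occupied_after (cap : option nat) (s : seq nat) (coin : nat -> bool)
  (x : nat) : bool :=
  let: (l, k) := carrier cap s coin x.-1 in
  if x \in s then ~~ (coin k && below_cap cap l) else (0 < l)%N.

(* One step of the SBBS: scan sites 1 .. (max position + #balls + 1), which
   is enough for the carrier to drop all its balls. *)
Definition sbbs_step (cap : option nat) (s : seq nat) (coin : nat -> bool)
  : seq nat :=
  [seq x <- iota 1 (\max_(y <- s) y + size s + 1) | occupied_after cap s coin x].

(* The SBBS trajectory: [eta t i] is eta^{(i)}_t (i = 1..d). *)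
Fixpoint sbbs (cap : option nat) (zeta0 : seq nat) (eta : nat -> nat -> bool)
  (t : nat) : seq nat :=
  match t with
  | 0 => zeta0
  | t'.+1 => sbbs_step cap (sbbs cap zeta0 eta t') (fun k => eta t' k.+1)
  end.

Definition gap (s : seq nat) : int :=
  (nth 0 s 1)%:Z - (nth 0 s 0)%:Z - 1.

Definition bulk (eta : nat -> nat -> bool) (t : nat) : int :=
  (\sum_(s < t) ((eta s 2)%:Z - (eta s 1)%:Z))%R.

Definition running_min (X : nat -> int) (t : nat) : int :=
  \big[Num.min/X 0]_(s < t.+1) X s.

Local Open Scope ring_scope.
Local Open Scope classical_set_scope.

(* The coins eta^{(i)}_t, t >= 0, i in {1,2}, are random variables on the
   probability space, each Bernoulli(1-eps) (P(eta = 1) = 1 - eps), and they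
   are mutually independent (product rule for every finite subfamily). *)
Definition iid_bernoulli_coins (d : measure_display) (T : measurableType d)
  (R : realType) (P : probability T R) (eps : R)
  (eta : nat -> nat -> T -> bool) : Prop :=
  [/\ (forall t i, measurable [set w | eta t i w]),
      (forall t i, i \in [:: 1; 2]%N -> P [set w | eta t i w] = (1 - eps)%:E) &
      (forall (F : seq (nat * nat)) (b : nat * nat -> bool),
          uniq F -> all (fun p => p.2 \in [:: 1; 2]%N) F ->
          P [set w | forall p, p \in F -> eta p.1 p.2 w = b p] =
          (\prod_(p <- F) fine (P [set w | eta p.1 p.2 w = b p]))%:E)].

From HB Require Import structures.
From mathcomp Require Import all_boot all_order all_algebra.
From mathcomp Require Import all_classical all_reals all_analysis.
From mathcomp Require Import zify.
Import Order.TTheory GRing.Theory Num.Theory.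

(* With two balls at a < b, each ball advances by its own coin, except when
   they are adjacent and the first one is picked up: then they end up adjacent
   again.  Hence the gap follows Lindley's recursion
   W_{t+1} = max (W_t + eta^(2)_t - eta^(1)_t, 0), whose solution from W_0 = 0
   is X_t - min_{s <= t} X_s.  This holds for every realisation of the coins,
   so the almost-sure statement is immediate. *)

Lemma filter_iota_mem (s : seq nat) m n :
  sorted ltn s -> all (fun x => m <= x < m + n) s ->
  [seq x <- iota m n | x \in s] = s.
Proof.
move=> s_sorted /allP s_range.
apply: (irr_sorted_eq ltn_trans ltnn) => //.
  exact: (sorted_filter ltn_trans _ (iota_ltn_sorted _ _)).
by move=> x; rewrite mem_filter mem_iota andb_idr // => /s_range.
Qed.

Section TwoBallStep.

Variables (cap : option nat) (coin : nat -> bool).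

(* When the balls are adjacent and the first is picked up, the carrier reaches
   the second ball loaded and drops its load at b.+1 (and b.+2). *)
Definition left_after (a b : nat) : nat :=
  if [&& coin 0, coin 1, below_cap cap 1 & b == a.+1] then b.+1 else a + coin 0.

Definition right_after (a b : nat) : nat :=
  if coin 0 && (b == a.+1) then b.+1 + (coin 1 && below_cap cap 1) else b + coin 1.

Variables (a b : nat).
Hypothesis a_lt_b : a < b.

Lemma gap_two_balls_after :
  gap [:: left_after a b; right_after a b] =
  (Num.max (gap [:: a; b] + ((coin 1)%:Z - (coin 0)%:Z)) 0)%R.
Proof.
rewrite /gap /left_after /right_after /= maxEle.
by case: (coin 0); case: (coin 1); case: (below_cap cap 1); case: eqP => /=; case: ifP; lia.
Qed.

Hypothesis a_gt0 : 0 < a.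

Lemma two_balls_after_bounds :
  [/\ 0 < left_after a b, left_after a b < right_after a b & right_after a b <= b.+2].
Proof.
rewrite /left_after /right_after.
by case: (coin 0); case: (coin 1); case: (below_cap cap 1); case: eqP => /= ?; split; lia.
Qed.

Hypothesis cap_gt0 : below_cap cap 0.

(* Truncated subtraction: the load at site b.-1 is [coin 0] if b = a.+1, else 0. *)
Let load_before_b := coin 0 - (b.-1 - a).
Let load_at_b := load_before_b + (coin 1 && below_cap cap load_before_b).

Lemma carrier_two_balls x :
  carrier cap [:: a; b] coin x =
  if x < a then (0, 0) else if x < b then (coin 0 - (x - a), 1)
  else (load_at_b - (x - b), 2).
Proof.
rewrite /load_at_b /load_before_b.
elim: x => [|x IH] /=; first by rewrite a_gt0.
rewrite IH !inE.
have [Sx_lt_a|a_le_Sx] := ltnP x.+1 a.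
  by rewrite ltnW // !ltn_eqF // (ltn_trans Sx_lt_a).
have [Sx_lt_b|b_le_Sx] := ltnP x.+1 b.
  rewrite (ltn_eqF Sx_lt_b) orbF (ltnW Sx_lt_b).
  have [x_lt_a|a_le_x] := ltnP x a.
    have <- : x.+1 = a by lia.
    by rewrite eqxx subnn cap_gt0 subn0; case: (coin 0).
  rewrite (gtn_eqF (a_le_x : a < x.+1)) /=.
  by case: (coin 0); do ?case: ifP => ?; congr pair; lia.
rewrite (gtn_eqF (leq_trans a_lt_b b_le_Sx)) /=.
have [x_lt_b|b_le_x] := ltnP x b.
  have <- : x.+1 = b by lia.
  have a_le_x : a <= x by lia.
  rewrite ltnNge a_le_x eqxx /= subnn subn0.
  by case: ifP; rewrite ?addn1 ?addn0.
rewrite ltnNge (leq_trans (ltnW a_lt_b) b_le_x) gtn_eqF //=.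
by case: ifP => ?; congr pair; lia.
Qed.

Lemma occupied_after_two_balls x : 0 < x ->
  occupied_after cap [:: a; b] coin x = (x == left_after a b) || (x == right_after a b).
Proof.
case: x => // y _.
rewrite /occupied_after /= carrier_two_balls /load_at_b /load_before_b !inE.
rewrite /left_after /right_after.
move: cap_gt0; case: cap => [c|] /= c_gt0;
  case c0 : (coin 0); case c1 : (coin 1);
  do !(rewrite ?c0 ?c1 /=; case: ifP => /= ?; try (exfalso; lia)); try (apply/idP/idP; lia).
Qed.

Lemma sbbs_step_two_balls :
  sbbs_step cap [:: a; b] coin = [:: left_after a b; right_after a b].
Proof.
have [left_gt0 left_lt_right right_le] := two_balls_after_bounds.
rewrite /sbbs_step.
have -> : \max_(y <- [:: a; b]) y = b by rewrite !big_cons big_nil maxn0; lia.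
rewrite -[RHS](@filter_iota_mem _ 1 (b + size [:: a; b] + 1)) /=; last 2 first.
- by rewrite andbT.
- by rewrite left_gt0 (ltn_trans left_gt0 left_lt_right); lia.
apply: eq_in_filter => x; rewrite mem_iota => /andP[x_gt0 _].
by rewrite occupied_after_two_balls // !inE.
Qed.

End TwoBallStep.

Local Open Scope ring_scope.

Lemma running_minS (X : nat -> int) t :
  running_min X t.+1 = Num.min (running_min X t) (X t.+1).
Proof.
rewrite /running_min -!(big_mkord xpredT).
rewrite (@big_cat_nat_idem _ _ _ (minxx _) t.+1) //= big_nat1_id minCA.
by rewrite (big_id_idem (minxx _)) minC.
Qed.

Lemma lindley_running_min (X W : nat -> int) :
  W 0%N = 0 -> (forall t, W t.+1 = Num.max (W t + (X t.+1 - X t)) 0) ->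
  forall t, W t = X t - running_min X t.
Proof.
move=> W0 WS; elim=> [|t IH].
  by rewrite W0 /running_min big_ord_recl big_ord0 minxx subrr.
by rewrite WS IH running_minS; lia.
Qed.

Lemma bulkS (eta : nat -> nat -> bool) t :
  bulk eta t.+1 = bulk eta t + ((eta t 2%N)%:Z - (eta t 1%N)%:Z).
Proof. by rewrite /bulk big_ord_recr. Qed.

Section TwoBallSBBS.

Variables (cap : option nat) (eta : nat -> nat -> bool) (p : nat).
Hypotheses (cap_gt0 : below_cap cap 0) (p_gt0 : (0 < p)%N).

Let zeta := sbbs cap [:: p; p.+1] eta.

Lemma sbbs_two_balls t : exists a b, [/\ zeta t = [:: a; b], (0 < a)%N & (a < b)%N].
Proof.
elim: t => [|t [a [b [zeta_t a_gt0 a_lt_b]]]]; first by exists p, p.+1.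
have [left_gt0 left_lt_right _] :=
  @two_balls_after_bounds cap (fun k => eta t k.+1) a b a_lt_b a_gt0.
by eexists _, _; rewrite /zeta /= -/(zeta t) zeta_t sbbs_step_two_balls.
Qed.

Lemma gap_sbbsS t :
  gap (zeta t.+1) = Num.max (gap (zeta t) + ((eta t 2%N)%:Z - (eta t 1%N)%:Z)) 0.
Proof.
have [a [b [zeta_t a_gt0 a_lt_b]]] := sbbs_two_balls t.
by rewrite /zeta /= -/(zeta t) zeta_t sbbs_step_two_balls // gap_two_balls_after.
Qed.

Lemma gap_sbbs_adjacent t : gap (zeta t) = bulk eta t - running_min (bulk eta) t.
Proof.
apply: (@lindley_running_min _ (fun s => gap (zeta s))) => [|s].
  by rewrite /zeta /gap /=; lia.
by rewrite gap_sbbsS bulkS [_ + _ - bulk eta s]addrC addKr.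
Qed.

End TwoBallSBBS.

Theorem mainTheorem10 (d : measure_display) (T : measurableType d)
  (R : realType) (P : probability T R) (eps : R)
  (cap : option nat) (eta : nat -> nat -> T -> bool) (p : nat) :
  0 <= eps <= 1 ->
  (forall c, cap = Some c -> (0 < c)%N) ->
  iid_bernoulli_coins P eps eta ->
  (0 < p)%N ->
  {ae P, forall w, forall t : nat,
     gap (sbbs cap [:: p; p.+1] (fun s i => eta s i w) t) =
     bulk (fun s i => eta s i w) t - running_min (bulk (fun s i => eta s i w)) t}.
Proof.
move=> _ cap_pos _ p_gt0; apply: aeW => w t.
apply: gap_sbbs_adjacent => //.
by case: cap cap_pos => //= c /(_ c erefl).
Qed.
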